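(* Let $x>1$ be an irrational real number and let $(x_n)_{n\geq1}$ be any sequence of rational numbers with $x_n\geq1$ and $x_n\to x$. Write the Taylor expansion at $q=0$ of the $q$-deformed rational $[x_n]_q$ as $[x_n]_q=\sum_{k\geq0}\varkappa_{n,k}q^k$. Then for every fixed $k\geq0$ the sequence $(\varkappa_{n,k})_{n\geq1}$ is eventually constant. Its eventual value $\varkappa_k=\lim_{n\to\infty}\varkappa_{n,k}$ is an integer, and the sequence $(\varkappa_k)_{k\geq0}$ does not depend on the choice of the sequence $(x_n)$ converging to $x$.
   Context: For an integer $a\geq1$ put $[a]_q=1+q+\cdots+q^{a-1}$ and $[a]_{q^{-1}}=1+q^{-1}+\cdots+q^{-(a-1)}$. Every rational number $r/s>1$ has a unique expansion as a regular continued fraction of even length, $$r/s=[a_1,\ldots,a_{2m}]=a_1+\cfrac{1}{a_2+\cfrac{1}{\ddots+\cfrac{1}{a_{2m}}}},$$ with all $a_i\in\mathbb{Z}_{\geq1}$. Its $q$-deformation is the rational function $$\left[\tfrac{r}{s}\right]_q=[a_1]_q+\cfrac{q^{a_1}}{[a_2]_{q^{-1}}+\cfrac{q^{-a_2}}{[a_3]_q+\cfrac{q^{a_3}}{[a_4]_{q^{-1}}+\cfrac{q^{-a_4}}{\ddots+\cfrac{q^{a_{2m-1}}}{[a_{2m}]_{q^{-1}}}}}}}.$$ One also sets $[1]_q=1$; for integers $n\geq2$ this gives $[n]_q=1+q+\cdots+q^{n-1}$. Each $[r/s]_q$ is a quotient $\mathcal{R}(q)/\mathcal{S}(q)$ of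 polynomials with nonnegative integer coefficients, each having constant term $1$. It is identified with its Taylor expansion at $q=0$, which is an element of $\mathbb{Z}[[q]]$. *)

From Stdlib Require Import Reals QArith Qreals ZArith List Arith.
Import ListNotations.

(* ---------- Integer polynomials, coefficients listed from degree 0 upward ---------- *)
Fixpoint padd (p q : list Z) : list Z :=
  match p, q with
  | [], _ => q
  | _, [] => p
  | a :: p', b :: q' => (a + b)%Z :: padd p' q'
  end.

Definition pscale (c : Z) (p : list Z) : list Z := map (Z.mul c) p.

Fixpoint pmul (p q : list Z) : list Z :=
  match p with
  | [] => []
  | a :: p' => padd (pscale a q) (0%Z :: pmul p' q)
  end.

Definition pshift (n : nat) (p : list Z) : list Z := repeat 0%Z n ++ p.

(* ---------- Laurent rational functions  q^sh * nu(q) / de(q) ---------- *)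
Record LFrac := mkLF { sh : Z; nu : list Z; de : list Z }.

Definition lf_one : LFrac := mkLF 0 [1%Z] [1%Z].
Definition lf_mon (k : Z) : LFrac := mkLF k [1%Z] [1%Z].
Definition qint (a : nat) : LFrac := mkLF 0 (repeat 1%Z a) [1%Z].
Definition qint_inv (a : nat) : LFrac :=                               (* [a]_{q^{-1}} *)
  mkLF (- (Z.of_nat a - 1)) (repeat 1%Z a) [1%Z].

Definition lf_add (x y : LFrac) : LFrac :=
  let m := Z.min (sh x) (sh y) in
  mkLF m
    (padd (pshift (Z.to_nat (sh x - m)) (pmul (nu x) (de y)))
          (pshift (Z.to_nat (sh y - m)) (pmul (nu y) (de x))))
    (pmul (de x) (de y)).

Definition lf_mul (x y : LFrac) : LFrac :=
  mkLF (sh x + sh y) (pmul (nu x) (nu y)) (pmul (de x) (de y)).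

Definition lf_inv (x : LFrac) : LFrac := mkLF (- sh x) (de x) (nu x).

Fixpoint lz (l : list Z) : nat :=
  match l with
  | z :: t => if Z.eqb z 0 then S (lz t) else 0
  | [] => 0
  end.

(* coefficients c_0..c_n of the power series P/D (D(0) <> 0), i.e. D * C = P *)
Fixpoint ser_upto (P D : list Q) (n : nat) : list Q :=
  match n with
  | O => [nth 0 P 0%Q / nth 0 D 0%Q]
  | S m =>
      let cs := ser_upto P D m in
      cs ++ [ (nth (S m) P 0%Q
               - fold_right Qplus 0%Q
                   (map (fun i => nth i D 0%Q * nth (S m - i) cs 0%Q) (seq 1 (S m))))
              / nth 0 D 0%Q ]%Q
  end.

(* coefficient of q^k in the Laurent expansion at q = 0 of x *)
Definition lf_coef (x : LFrac) (k : nat) : Q :=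
  let j := lz (de x) in
  let P := map inject_Z (nu x) in
  let D := map inject_Z (skipn j (de x)) in
  let idx := (Z.of_nat k - sh x + Z.of_nat j)%Z in
  if (idx <? 0)%Z then 0%Q
  else nth (Z.to_nat idx) (ser_upto P D (Z.to_nat idx)) 0%Q.

Fixpoint cf_nat (fuel a b : nat) : list nat :=
  match fuel with
  | O => []
  | S f =>
      if Nat.eqb b 0 then []
      else Nat.div a b :: (if Nat.eqb (Nat.modulo a b) 0 then [] else cf_nat f b (Nat.modulo a b))
  end.

Definition evenize (l : list nat) : list nat :=
  if Nat.even (length l) then l
  else removelast l ++ [Nat.sub (last l 0%nat) 1; 1%nat].

Definition even_cf (t : Q) : list nat :=
  let a := Z.to_nat (Qnum t) in
  let b := Pos.to_nat (Qden t) in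
  evenize (cf_nat (S b) a b).

Fixpoint qcf (up : bool) (l : list nat) : LFrac :=
  match l with
  | [] => lf_one
  | [a] => if up then qint a else qint_inv a
  | a :: rest =>
      if up then lf_add (qint a) (lf_mul (lf_mon (Z.of_nat a)) (lf_inv (qcf false rest)))
      else lf_add (qint_inv a) (lf_mul (lf_mon (- Z.of_nat a)) (lf_inv (qcf true rest)))
  end.

Definition qdef (t : Q) : LFrac :=
  if Qeq_bool t 1 then lf_one else qcf true (even_cf t).

Definition varkappa (t : Q) (k : nat) : Q := lf_coef (qdef t) k.

(* The first j partial quotients of a rational a/b are locally
   constant around an irrational y > 1 (the Euclidean algorithm only compares
   with integers, which y is never equal to).  Hence for x_n -> x the even
   continued fraction of x_n eventually starts with any fixed prefix of the
   expansion of x.  On the q-side, the value of an even q-continued fraction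
   [a, b, rest]_q is psi a b ([rest]_q), with
       psi a b W = [a]_q + q^(a+b) W / (1 + q [b]_q W),
   which maps quotients of integer polynomials with constant term 1 to
   themselves and raises the q-adic order of differences by a + b >= 1.
   So two even q-continued fractions sharing a prefix of length 2J agree to
   order J, and the first k+1 coefficients of [x_n]_q are eventually those of
   [pre ++ [1; 1]]_q, an integral power series. *)

From Stdlib Require Import Reals QArith Qreals ZArith.
From Stdlib Require Import Lia Lra List Arith IndefiniteDescription.
From mathcomp Require all_boot all_order all_algebra Rstruct ring zify.

Module ContinuedFraction.
Import ListNotations.
Local Open Scope R_scope.

Definition irrational (y : R) : Prop := forall r : Q, Q2R r <> y.

Lemma cf_nat_fuel f1 f2 a b :
  (b < f1)%nat -> (b < f2)%nat -> cf_nat f1 a b = cf_nat f2 a b.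
Proof.
revert f2 a b; induction f1 as [|f1 IH]; intros f2 a b h1 h2; [lia|].
destruct f2 as [|f2]; [lia|].
simpl. destruct (Nat.eqb_spec b 0) as [|Hb]; [reflexivity|].
destruct (Nat.eqb (a mod b) 0); [reflexivity|].
f_equal. apply IH; pose proof (Nat.mod_upper_bound a b Hb); lia.
Qed.

Definition euclid_cf (a b : nat) : list nat := cf_nat (S b) a b.

Lemma euclid_cf_unfold a b : (0 < b)%nat ->
  euclid_cf a b =
  (a / b)%nat :: (if Nat.eqb (a mod b) 0 then [] else euclid_cf b (a mod b)).
Proof.
intros hb. unfold euclid_cf at 1. simpl.
destruct (Nat.eqb_spec b 0) as [|Hb]; [lia|].
destruct (Nat.eqb (a mod b) 0); [reflexivity|].
f_equal. apply cf_nat_fuel; pose proof (Nat.mod_upper_bound a b Hb); lia.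
Qed.

Definition admissible (l : list nat) : Prop :=
  l <> [] /\ Forall (fun d => (1 <= d)%nat) l /\ (2 <= last l 0)%nat.

Lemma euclid_cf_admissible b a : (0 < b < a)%nat -> admissible (euclid_cf a b).
Proof.
revert a; induction b as [b IH] using (well_founded_induction lt_wf).
intros a hab. rewrite euclid_cf_unfold by lia.
assert (hq : (1 <= a / b)%nat) by (apply Nat.div_le_lower_bound; lia).
pose proof (Nat.div_mod_eq a b) as Ediv.
destruct (Nat.eqb_spec (a mod b) 0) as [E|E].
- split; [discriminate|split; [constructor; auto|]].
  simpl. rewrite E in Ediv.
  destruct (Nat.eq_dec (a / b) 1) as [E1|]; [rewrite E1 in Ediv; lia|lia].
- pose proof (Nat.mod_upper_bound a b ltac:(lia)) as M.
  destruct (IH (a mod b) M b ltac:(lia)) as [hn [hf hl]].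
  split; [discriminate|split; [constructor; auto|]].
  destruct (euclid_cf b (a mod b)); [contradiction|exact hl].
Qed.

Lemma evenize_prefix pre rest :
  Nat.even (length pre) = true -> admissible rest ->
  exists rest', evenize (pre ++ rest) = pre ++ rest' /\
    Nat.even (length rest') = true /\ rest' <> [] /\
    Forall (fun d => (1 <= d)%nat) rest'.
Proof.
intros hp [hn [hf hl]].
destruct (exists_last hn) as [r [z ->]].
rewrite last_last in hl.
unfold evenize. rewrite length_app, Nat.even_add, hp.
destruct (Nat.even (length (r ++ [z]))) eqn:Er; simpl.
- exists (r ++ [z]). auto.
- exists (r ++ [(z - 1)%nat; 1%nat]).
  rewrite app_assoc, removelast_last, last_last, <- !app_assoc.
  rewrite length_app in Er |- *. simpl in Er |- *.
  rewrite Nat.even_add in Er |- *. simpl in Er |- *.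
  apply Forall_app in hf as [hr _].
  repeat split.
  + destruct (Nat.even (length r)); simpl in *; congruence.
  + intro H. apply app_eq_nil in H as [_ H]. discriminate.
  + apply Forall_app. split; [exact hr|repeat constructor; lia].
Qed.

Lemma Q2R_inject_Z z : Q2R (inject_Z z) = IZR z.
Proof. unfold Q2R. simpl. field. Qed.

Lemma irrational_floor y : 1 < y -> irrational y ->
  exists c : nat, (1 <= c)%nat /\ INR c < y < INR c + 1.
Proof.
intros hy hirr. destruct (archimed y) as [h1 h2].
assert (hz : (2 <= up y)%Z) by (cut (1 < up y)%Z; [lia|apply lt_IZR; lra]).
exists (Z.to_nat (up y - 1)).
assert (E : INR (Z.to_nat (up y - 1)) = IZR (up y) - 1).
{ rewrite INR_IZR_INZ, Z2Nat.id, minus_IZR by lia. reflexivity. }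
rewrite E. split; [lia|split; [|lra]].
destruct (Rle_lt_or_eq_dec (IZR (up y) - 1) y) as [H|H]; [lra|exact H|].
exfalso. apply (hirr (inject_Z (up y - 1))).
rewrite Q2R_inject_Z, minus_IZR. exact H.
Qed.

Lemma irrational_inv_frac y (c : nat) : INR c < y -> irrational y ->
  irrational (/ (y - INR c)).
Proof.
intros hc hirr r hr.
assert (hr0 : ~ r == 0).
{ intro e. apply Qeq_eqR in e. rewrite hr in e. unfold Q2R in e. simpl in e.
  assert (/ (y - INR c) > 0) by (apply Rinv_0_lt_compat; lra). lra. }
apply (hirr (inject_Z (Z.of_nat c) + / r)%Q).
rewrite Q2R_plus, Q2R_inv, Q2R_inject_Z, <- INR_IZR_INZ, hr, Rinv_inv
  by exact hr0.
lra.
Qed.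

Lemma Un_cv_eventually_between (u : nat -> R) y lo hi :
  Un_cv u y -> lo < y < hi -> exists N, forall n, (N <= n)%nat -> lo < u n < hi.
Proof.
intros hu [h1 h2].
destruct (hu (Rmin (y - lo) (hi - y))) as [N HN]; [apply Rmin_pos; lra|].
exists N. intros n hn. specialize (HN n hn). unfold R_dist in HN.
apply Rabs_def2 in HN as [H1 H2].
pose proof (Rmin_l (y - lo) (hi - y)). pose proof (Rmin_r (y - lo) (hi - y)).
lra.
Qed.

Lemma Un_cv_eventually_ext (u v : nat -> R) l :
  Un_cv u l -> (exists N, forall n, (N <= n)%nat -> v n = u n) -> Un_cv v l.
Proof.
intros hu [N HN] eps he. destruct (hu eps he) as [M HM].
exists (Nat.max N M). intros n hn. rewrite HN by lia. apply HM. lia.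
Qed.

Lemma ratio_gt_nat (a b c : nat) : (0 < b)%nat ->
  INR c < INR a / INR b -> (c * b < a)%nat.
Proof.
intros hb h. apply lt_0_INR in hb. apply INR_lt. rewrite mult_INR.
apply (Rmult_lt_compat_r (INR b)) in h; [|exact hb].
unfold Rdiv in h. rewrite Rmult_assoc, Rinv_l in h by lra. lra.
Qed.

Lemma ratio_lt_nat (a b c : nat) : (0 < b)%nat ->
  INR a / INR b < INR c -> (a < c * b)%nat.
Proof.
intros hb h. apply lt_0_INR in hb. apply INR_lt. rewrite mult_INR.
apply (Rmult_lt_compat_r (INR b)) in h; [|exact hb].
unfold Rdiv in h. rewrite Rmult_assoc, Rinv_l in h by lra. lra.
Qed.

Lemma euclid_step_eventually (a b : nat -> nat) y c :
  (exists N, forall n, (N <= n)%nat -> (0 < b n)%nat) ->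
  Un_cv (fun n => INR (a n) / INR (b n)) y -> INR c < y < INR c + 1 ->
  exists N, forall n, (N <= n)%nat ->
    (0 < b n)%nat /\ (a n / b n = c)%nat /\ (a n mod b n = a n - c * b n)%nat /\
    (c * b n < a n < S c * b n)%nat.
Proof.
intros [N0 H0] hcv hy.
destruct (Un_cv_eventually_between _ _ _ _ hcv hy) as [N1 H1].
exists (Nat.max N0 N1). intros n hn.
specialize (H0 n ltac:(lia)). destruct (H1 n ltac:(lia)) as [lo hi].
apply ratio_gt_nat in lo; [|exact H0].
rewrite <- S_INR in hi. apply ratio_lt_nat in hi; [|exact H0].
repeat split; try lia.
- symmetry. apply (Nat.div_unique _ _ _ (a n - c * b n)); lia.
- symmetry. apply (Nat.mod_unique _ _ c); lia.
Qed.

Lemma Un_cv_euclid_step (a b : nat -> nat) y c :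
  (exists N, forall n, (N <= n)%nat -> (0 < b n)%nat) ->
  Un_cv (fun n => INR (a n) / INR (b n)) y -> INR c < y < INR c + 1 ->
  Un_cv (fun n => INR (b n) / INR (a n mod b n)) (/ (y - INR c)).
Proof.
intros hb hcv hy.
destruct (euclid_step_eventually a b y c hb hcv hy) as [N HN].
apply (Un_cv_eventually_ext (fun n => / (INR (a n) / INR (b n) - INR c))).
- apply (continuity_seq (fun t => / (t - INR c))); [reg; lra|exact hcv].
- exists N. intros n hn. destruct (HN n hn) as [hb0 [_ [hm [hlo _]]]].
  rewrite hm, minus_INR, mult_INR by lia.
  apply lt_0_INR in hb0. apply lt_INR in hlo. rewrite mult_INR in hlo.
  field. lra.
Qed.

Lemma cf_prefix_stable j : forall y, 1 < y -> irrational y ->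
  exists pre : list nat, length pre = j /\ Forall (fun d => (1 <= d)%nat) pre /\
  forall a b : nat -> nat,
    (exists N, forall n, (N <= n)%nat -> (0 < b n)%nat) ->
    Un_cv (fun n => INR (a n) / INR (b n)) y ->
    exists N, forall n, (N <= n)%nat ->
      exists rest, euclid_cf (a n) (b n) = pre ++ rest /\ admissible rest.
Proof.
induction j as [|j IH]; intros y hy hirr.
- exists []. split; [reflexivity|split; [constructor|]].
  intros a b [N0 H0] hcv.
  destruct (Un_cv_eventually_between _ _ (INR 1) (y + 1) hcv ltac:(simpl; lra))
    as [N1 H1].
  exists (Nat.max N0 N1). intros n hn. exists (euclid_cf (a n) (b n)).
  split; [reflexivity|]. apply euclid_cf_admissible.
  specialize (H0 n ltac:(lia)). destruct (H1 n ltac:(lia)) as [lo _].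
  apply ratio_gt_nat in lo; lia.
- destruct (irrational_floor y hy hirr) as [c [hc1 hc]].
  assert (hy' : 1 < / (y - INR c)).
  { rewrite <- Rinv_1 at 1. apply Rinv_lt_contravar; lra. }
  destruct (IH _ hy' (irrational_inv_frac y c (proj1 hc) hirr))
    as [pre [hl [hf hP]]].
  exists (c :: pre). split; [simpl; lia|split; [constructor; auto|]].
  intros a b hb hcv.
  destruct (euclid_step_eventually a b y c hb hcv hc) as [N1 H1].
  destruct (hP b (fun n => a n mod b n)) as [N2 H2].
  + exists N1. intros n hn. destruct (H1 n hn) as [_ [_ [hm hab]]]. lia.
  + exact (Un_cv_euclid_step a b y c hb hcv hc).
  + exists (Nat.max N1 N2). intros n hn.
    destruct (H2 n ltac:(lia)) as [rest [hr hg]].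
    destruct (H1 n ltac:(lia)) as [hb0 [hq [hm hab]]].
    exists rest. split; [|exact hg].
    rewrite euclid_cf_unfold, hq by exact hb0.
    destruct (Nat.eqb_spec (a n mod b n) 0); [lia|].
    rewrite hr. reflexivity.
Qed.

End ContinuedFraction.

Module QSeries.
Import all_boot all_order all_algebra Rstruct ring zify.
Import Order.TTheory GRing.Theory Num.Theory.
Set Implicit Arguments. Unset Strict Implicit. Unset Printing Implicit Defensive.
Local Open Scope ring_scope.
Delimit Scope Z_scope with zz.
Local Notation "x %:F" := (@tofrac _ x).

(* Field identities used to compute in the fraction field of R[X] below.
   They are stated for an abstract field: the [field] tactic is impractical
   on the concrete fraction field. *)
Section FieldIdentities.
Variable K : fieldType.
Implicit Types a b c d m u v w x y A B : K.

Lemma field_add_scaled m a b x y u v : u != 0 -> v != 0 ->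
  m * ((a * (x * v) + b * (y * u)) / (u * v)) = m * a * (x / u) + m * b * (y / v).
Proof. by move=> hu hv; field; rewrite hu hv. Qed.

Lemma field_sub_div a b c : b != 0 -> a / b - c = (a - b * c) / b.
Proof. by move=> hb; field; rewrite hb. Qed.

Lemma field_add_div a x A B : B != 0 -> a + x * (A / B) = (a * B + x * A) / B.
Proof. by move=> hB; field; rewrite hB. Qed.

Lemma field_psi_sub w x A B : 1 + x * A != 0 -> 1 + x * B != 0 ->
  w * (A / (1 + x * A)) - w * (B / (1 + x * B)) =
  w * ((A - B) * (1 + x * A)^-1 * (1 + x * B)^-1).
Proof. by move=> h1 h2; field; rewrite h1 h2. Qed.

Lemma field_cf_tail x u b w : x != 0 -> u != 0 -> w != 0 ->
  u^-1 * b + (x * u)^-1 * w^-1 = (1 + x * b * w) / (x * u * w).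
Proof. by move=> h1 h2 h3; field; rewrite h1 h2 h3. Qed.

End FieldIdentities.

Fixpoint zpoly (l : list Z) : {poly R} :=
  match l with nil => 0 | cons a t => (IZR a)%:P + 'X * zpoly t end.

Lemma zpoly_coef l i : (zpoly l)`_i = IZR (List.nth i l Z0).
Proof.
elim: l i => [|a l IH] i /=; first by rewrite coef0; case: i.
rewrite coefD coefC coefXM; case: i => [|i] /=; first by rewrite addr0.
by rewrite add0r IH.
Qed.

Lemma zpoly_padd p q : zpoly (padd p q) = zpoly p + zpoly q.
Proof.
elim: p q => [|a p IH] [|b q] /=; rewrite ?add0r ?addr0 //.
rewrite IH plus_IZR polyCD; ring.
Qed.

Lemma zpoly_pscale c p : zpoly (pscale c p) = (IZR c)%:P * zpoly p.
Proof.
elim: p => [|a p IH] /=; first by rewrite mulr0.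
rewrite /pscale /= -/(pscale c p) IH mult_IZR polyCM; ring.
Qed.

Lemma zpoly_pmul p q : zpoly (pmul p q) = zpoly p * zpoly q.
Proof.
elim: p => [|a p IH] /=; first by rewrite mul0r.
by rewrite zpoly_padd zpoly_pscale /= IH add0r; ring.
Qed.

Lemma zpoly_pshift n p : zpoly (pshift n p) = 'X^n * zpoly p.
Proof.
rewrite /pshift; elim: n => [|n IH] /=; first by rewrite expr0 mul1r.
by rewrite IH add0r exprS mulrA.
Qed.

Lemma zpoly_one : zpoly (cons 1%zz nil) = 1.
Proof. by rewrite /= mulr0 addr0. Qed.

Definition ones (a : nat) : list Z := List.repeat 1%zz a.

Lemma ones_coef0 a : (0 < a)%N -> (zpoly (ones a))`_0 = 1.
Proof. by case: a => // a _; rewrite zpoly_coef. Qed.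

Lemma coef0_neq0 (p : {poly R}) : p`_0 != 0 -> p != 0.
Proof. by apply: contraNneq => ->; rewrite coef0. Qed.

Lemma low_coefs_mul (p q : {poly R}) M : q`_0 != 0 ->
  (forall i, (i < M)%N -> (p * q)`_i = 0) -> forall i, (i < M)%N -> p`_i = 0.
Proof.
move=> hq h; elim/ltn_ind => i IH hiM.
move: (h i hiM); rewrite coefM big_ord_recr /= subnn big1 ?add0r.
  by move/eqP; rewrite mulf_eq0 (negbTE hq) orbF => /eqP.
move=> j _; rewrite IH ?mul0r //; exact: ltn_trans (ltn_ord j) hiM.
Qed.

Lemma low_coefs_div (p : {poly R}) n :
  (forall i, (i < n)%N -> p`_i = 0) -> p = 'X^n * drop_poly n p.
Proof.
move=> h; rewrite -{1}(poly_take_drop n p).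
have -> : take_poly n p = 0.
  by apply/polyP => i; rewrite coef_take_poly coef0; case: ifP => // /h.
by rewrite add0r mulrC.
Qed.

Notation F := {fraction {poly R}}.

Definition X : F := ('X)%:F.

Lemma X_neq0 : X != 0.
Proof. by rewrite /X tofrac_eq0 polyX_eq0. Qed.

Lemma Xn_neq0 n : X ^+ n != 0.
Proof. by rewrite expf_neq0 // X_neq0. Qed.

Lemma tofracXn n : ('X^n)%:F = X ^+ n :> F.
Proof. by rewrite rmorphXn. Qed.

Definition Xz (z : Z) : F := X ^+ Z.to_nat z / X ^+ Z.to_nat (- z).

Lemma Xz_neq0 z : Xz z != 0.
Proof. by rewrite /Xz mulf_neq0 ?invr_neq0 ?Xn_neq0. Qed.

Lemma XzD a b : Xz (a + b) = Xz a * Xz b.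
Proof.
rewrite /Xz mulf_div -!exprD; apply/eqP.
rewrite eqr_div ?Xn_neq0 // -!exprD; apply/eqP; congr (_ ^+ _); lia.
Qed.

Lemma Xz_nat n : Xz (Z.of_nat n) = X ^+ n.
Proof.
rewrite /Xz Nat2Z.id; have -> : Z.to_nat (- Z.of_nat n) = 0%N by lia.
by rewrite expr0 invr1 mulr1.
Qed.

Lemma Xz0 : Xz 0 = 1.
Proof. by rewrite (Xz_nat 0) expr0. Qed.

Lemma XzN z : Xz (- z) = (Xz z)^-1.
Proof.
apply: (mulfI (Xz_neq0 z)); rewrite -XzD mulfV ?Xz_neq0 //.
by rewrite Z.add_opp_diag_r Xz0.
Qed.

Definition lf_val (x : LFrac) : F :=
  Xz (sh x) * ((zpoly (nu x))%:F / (zpoly (de x))%:F).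

Lemma lf_val_add x y : zpoly (de x) != 0 -> zpoly (de y) != 0 ->
  lf_val (lf_add x y) = lf_val x + lf_val y.
Proof.
move=> hx hy; rewrite /lf_val /lf_add /= zpoly_padd !zpoly_pshift !zpoly_pmul.
set m := Z.min (sh x) (sh y).
have ex : sh x = (m + Z.of_nat (Z.to_nat (sh x - m)))%zz by rewrite /m; lia.
have ey : sh y = (m + Z.of_nat (Z.to_nat (sh y - m)))%zz by rewrite /m; lia.
rewrite [in RHS]ex [in RHS]ey !XzD !Xz_nat !rmorphD !rmorphM /= !tofracXn.
by apply: field_add_scaled; rewrite tofrac_eq0.
Qed.

Lemma lf_val_mul x y : lf_val (lf_mul x y) = lf_val x * lf_val y.
Proof. by rewrite /lf_val /lf_mul /= !zpoly_pmul XzD !rmorphM /= -mulf_div; ring. Qed.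

Lemma lf_val_inv x : lf_val (lf_inv x) = (lf_val x)^-1.
Proof.
rewrite /lf_val; cbn [nu de sh]; rewrite XzN [RHS]invfM; congr (_ * _).
by rewrite invf_div.
Qed.

Lemma lf_val_mon k : lf_val (lf_mon k) = Xz k.
Proof. by rewrite /lf_val; cbn [nu de sh]; rewrite zpoly_one rmorph1 divr1 mulr1. Qed.

Definition qnum (a : nat) : F := (zpoly (ones a))%:F.

Lemma lf_val_qint a : lf_val (qint a) = qnum a.
Proof. by rewrite /lf_val; cbn [nu de sh]; rewrite zpoly_one rmorph1 divr1 Xz0 mul1r. Qed.

Lemma lf_val_qint_inv a : (0 < a)%N -> lf_val (qint_inv a) = (X ^+ a.-1)^-1 * qnum a.
Proof.
move=> ha; rewrite /lf_val /qint_inv; cbn [nu de sh].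
by rewrite zpoly_one rmorph1 divr1 -Xz_nat -XzN; congr (Xz _ * _); lia.
Qed.

Definition ord_ge (K : Z) (f : F) : Prop :=
  exists a b : {poly R}, b`_0 != 0 /\ f = Xz K * (a%:F / b%:F).

Lemma tofrac_coef0_neq0 (p : {poly R}) : p`_0 != 0 -> p%:F != 0 :> F.
Proof. by move/coef0_neq0; rewrite tofrac_eq0. Qed.

Lemma ord_ge_frac (a b : {poly R}) : b`_0 != 0 -> ord_ge 0 (a%:F / b%:F).
Proof. by move=> h; exists a, b; split => //; rewrite Xz0 mul1r. Qed.

Lemma ord_ge_Xz K : ord_ge K (Xz K).
Proof.
exists 1, 1; split; first by rewrite coef1 oner_neq0.
by rewrite rmorph1 divr1 mulr1.
Qed.

Lemma ord_ge_add K f g : ord_ge K f -> ord_ge K g -> ord_ge K (f + g).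
Proof.
move=> [a [b [hb ->]]] [c [d [hd ->]]].
exists (a * d + c * b), (b * d); split; first by rewrite coef0M mulf_neq0.
by rewrite -mulrDr addf_div ?tofrac_coef0_neq0 // rmorphD !rmorphM.
Qed.

Lemma ord_ge_opp K f : ord_ge K f -> ord_ge K (- f).
Proof.
move=> [a [b [hb ->]]]; exists (- a), b; split => //.
by rewrite rmorphN /= mulNr mulrN.
Qed.

Lemma ord_ge_sub K f g : ord_ge K f -> ord_ge K g -> ord_ge K (f - g).
Proof. by move=> hf hg; apply: ord_ge_add => //; apply: ord_ge_opp. Qed.

Lemma ord_ge_mul K L f g : ord_ge K f -> ord_ge L g -> ord_ge (K + L) (f * g).
Proof.
move=> [a [b [hb ->]]] [c [d [hd ->]]].
exists (a * c), (b * d); split; first by rewrite coef0M mulf_neq0.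
by rewrite XzD !rmorphM /= -mulf_div; ring.
Qed.

Lemma ord_ge_le L K f : (L <= K)%zz -> ord_ge K f -> ord_ge L f.
Proof.
move=> hLK [a [b [hb ->]]].
set n := Z.to_nat (K - L).
have -> : K = (L + Z.of_nat n)%zz by rewrite /n; lia.
exists ('X^n * a), b; split => //.
by rewrite XzD Xz_nat rmorphM /= tofracXn; ring.
Qed.

Lemma ord_ge_poly_coef (p : {poly R}) (L : nat) : ord_ge (Z.of_nat L) (p%:F) ->
  forall i, (i < L)%N -> p`_i = 0.
Proof.
move=> [a [b [hb e]]].
have e2 : (p * b)%:F = ('X^L * a)%:F.
  by rewrite !rmorphM /= tofracXn -Xz_nat e -mulrA divfK ?tofrac_coef0_neq0.
move/eqP: e2; rewrite tofrac_eq => /eqP e2.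
apply: (low_coefs_mul hb) => i hi.
by rewrite e2 coefXnM hi.
Qed.

(* Integral series: quotients of integer polynomials with constant term 1;
   their power series expansions have integer coefficients. *)
Definition int_series (f : F) : Prop := exists la lb : list Z,
  (zpoly la)`_0 = 1 /\ (zpoly lb)`_0 = 1 /\ f = (zpoly la)%:F / (zpoly lb)%:F.

Lemma int_series_ord_ge0 f : int_series f -> ord_ge 0 f.
Proof. by move=> [la [lb [_ [hb ->]]]]; apply: ord_ge_frac; rewrite hb oner_neq0. Qed.

Lemma int_series_inv f : int_series f -> int_series f^-1.
Proof. by move=> [la [lb [ha [hb ->]]]]; exists lb, la; rewrite invf_div. Qed.

Lemma int_series_neq0 f : int_series f -> f != 0.
Proof.
move=> [la [lb [ha [hb ->]]]].
by rewrite mulf_neq0 ?invr_neq0 // tofrac_coef0_neq0 // ?ha ?hb oner_neq0.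
Qed.

Lemma int_series_mul f g : int_series f -> int_series g -> int_series (f * g).
Proof.
move=> [la [lb [ha [hb ->]]]] [lc [ld [hc [hd ->]]]].
exists (pmul la lc), (pmul lb ld).
by rewrite !zpoly_pmul !coef0M ha hb hc hd mulr1 !rmorphM mulf_div.
Qed.

Lemma int_series_lin (c p : list Z) n U : (zpoly c)`_0 = 1 -> (0 < n)%N ->
  int_series U -> int_series ((zpoly c)%:F + X ^+ n * (zpoly p)%:F * U).
Proof.
move=> hc hn [la [lb [ha [hb ->]]]].
exists (padd (pmul c lb) (pshift n (pmul p la))), lb; split; last split => //.
  by rewrite zpoly_padd zpoly_pshift !zpoly_pmul coefD coefXnM hn coef0M hc hb mulr1 addr0.
rewrite zpoly_padd zpoly_pshift !zpoly_pmul !rmorphD !rmorphM /= tofracXn.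
by rewrite field_add_div ?tofrac_coef0_neq0 ?hb ?oner_neq0 // !mulrA.
Qed.

Lemma int_series_qnum b : (0 < b)%N -> int_series (qnum b).
Proof.
by move=> hb; exists (ones b), (cons 1%zz nil); rewrite zpoly_one ones_coef0 // coef1 rmorph1 divr1.
Qed.

(* The truncated geometric series 1 - Xq + (Xq)^2 - ... of 1/(1 + Xq),
   with K terms. *)
Fixpoint geo_trunc (q : list Z) (K : nat) : list Z :=
  match K with
  | O => nil
  | S K => padd (cons 1%zz nil) (pmul (pscale (-1)%zz (cons 0%zz q)) (geo_trunc q K))
  end.

Lemma zpoly_geo_trunc q K :
  (1 + 'X * zpoly q) * zpoly (geo_trunc q K) = 1 - (- ('X * zpoly q)) ^+ K.
Proof.
elim: K => [|K IH]; first by rewrite /= mulr0 expr0 subrr.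
change (geo_trunc q K.+1) with
  (padd (cons 1%zz nil) (pmul (pscale (-1)%zz (cons 0%zz q)) (geo_trunc q K))).
rewrite zpoly_padd zpoly_one zpoly_pmul zpoly_pscale.
rewrite [zpoly (cons 0%zz q)]/= add0r exprS.
have -> : IZR (-1)%zz = -1 :> R by [].
rewrite polyCN polyC1.
transitivity (1 + 'X * zpoly q - 'X * zpoly q * ((1 + 'X * zpoly q) * zpoly (geo_trunc q K)));
  first by ring.
by rewrite IH; ring.
Qed.

Lemma int_series_trunc f K : int_series f ->
  exists l, ord_ge (Z.of_nat K) (f - (zpoly l)%:F).
Proof.
move=> [la [[|b0 lq] [ha [hb ->]]]].
  by move: hb; rewrite /= coef0 => /eqP; rewrite eq_sym oner_eq0.
set B := zpoly (cons b0 lq).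
have eB : B = 1 + 'X * zpoly lq.
  by move: hb; rewrite /B zpoly_coef /= => ->; rewrite polyC1.
exists (pmul la (geo_trunc lq K)), (zpoly la * (- zpoly lq) ^+ K), B.
split; first by rewrite hb oner_neq0.
have ep : zpoly la - B * zpoly (pmul la (geo_trunc lq K)) =
          'X^K * (zpoly la * (- zpoly lq) ^+ K).
  rewrite zpoly_pmul eB.
  transitivity (zpoly la - zpoly la * ((1 + 'X * zpoly lq) * zpoly (geo_trunc lq K)));
    first by ring.
  by rewrite zpoly_geo_trunc -[- ('X * _)]mulrN exprMn; ring.
rewrite field_sub_div ?tofrac_coef0_neq0 ?hb ?oner_neq0 // Xz_nat -tofracXn.
by rewrite -rmorphM -rmorphB /= ep rmorphM mulrA.
Qed.

(* The map W |-> [a]_q + X^(a+b) W / (1 + X [b]_q W).  The value of an even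
   q-continued fraction [a, b, rest] is psi a b applied to that of [rest]. *)
Definition psi (a b : nat) (W : F) : F :=
  qnum a + X ^+ (a + b) * (W / (1 + X * qnum b * W)).

Lemma int_series_psi_denom b W : int_series W -> int_series (1 + X * qnum b * W).
Proof.
move=> hW; have -> : 1 + X * qnum b * W =
  (zpoly (cons 1%zz nil))%:F + X ^+ 1 * (zpoly (ones b))%:F * W.
  by rewrite zpoly_one rmorph1 expr1.
by apply: int_series_lin; rewrite ?zpoly_one ?coef1.
Qed.

Lemma int_series_psi a b W : (0 < a)%N -> int_series W -> int_series (psi a b W).
Proof.
move=> ha hW; have -> : psi a b W = (zpoly (ones a))%:F +
  X ^+ (a + b) * (zpoly (cons 1%zz nil))%:F * (W * (1 + X * qnum b * W)^-1).
  by rewrite zpoly_one rmorph1 mulr1.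
apply: int_series_lin; rewrite ?ones_coef0 ?addn_gt0 ?ha //.
by apply: int_series_mul => //; apply/int_series_inv/int_series_psi_denom.
Qed.

Lemma ord_ge_psi a b W W' K : int_series W -> int_series W' -> ord_ge K (W - W') ->
  ord_ge (K + Z.of_nat (a + b)) (psi a b W - psi a b W').
Proof.
move=> hW hW' hK.
have hD := int_series_psi_denom b hW; have hD' := int_series_psi_denom b hW'.
rewrite /psi opprD addrACA subrr add0r.
rewrite field_psi_sub ?int_series_neq0 // -Xz_nat Z.add_comm.
apply: ord_ge_mul; first exact: ord_ge_Xz.
rewrite -[K]Z.add_0_r -[(K + 0)%zz]Z.add_0_r.
apply: ord_ge_mul; last exact/int_series_ord_ge0/int_series_inv.
by apply: ord_ge_mul => //; apply/int_series_ord_ge0/int_series_inv.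
Qed.

Definition lf_nonzero (x : LFrac) : Prop := zpoly (nu x) != 0 /\ zpoly (de x) != 0.

Lemma nu_neq0_of_val x : zpoly (de x) != 0 -> lf_val x != 0 -> zpoly (nu x) != 0.
Proof. by move=> hd; apply: contraNneq => hn; rewrite /lf_val hn rmorph0 mul0r mulr0. Qed.

Lemma zpoly_de_add x y : zpoly (de (lf_add x y)) = zpoly (de x) * zpoly (de y).
Proof. exact: zpoly_pmul. Qed.

Lemma zpoly_de_mon_inv k y : zpoly (de (lf_mul (lf_mon k) (lf_inv y))) = zpoly (nu y).
Proof. by rewrite /lf_mul /lf_inv /lf_mon; cbn [de nu]; rewrite zpoly_pmul zpoly_one mul1r. Qed.

Lemma qcf_pair_val a b : (0 < b)%N ->
  lf_val (qcf true [:: a; b]) = qnum a + X ^+ (a + b.-1) * (qnum b)^-1.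
Proof.
move=> hb; change (qcf true [:: a; b]) with
  (lf_add (qint a) (lf_mul (lf_mon (Z.of_nat a)) (lf_inv (qint_inv b)))).
rewrite lf_val_add ?zpoly_de_mon_inv ?zpoly_one ?oner_neq0 //; last first.
  by apply: coef0_neq0; rewrite ones_coef0 ?oner_neq0.
rewrite lf_val_mul lf_val_inv lf_val_mon lf_val_qint lf_val_qint_inv //.
by rewrite invfM invrK Xz_nat mulrA -exprD.
Qed.

Lemma qcf_pair a b : (0 < a)%N -> (0 < b)%N ->
  lf_nonzero (qcf true [:: a; b]) /\ int_series (lf_val (qcf true [:: a; b])).
Proof.
move=> ha hb.
have hI : int_series (lf_val (qcf true [:: a; b])).
  rewrite qcf_pair_val // -[X ^+ _]mulr1 -(rmorph1 (@tofrac _)) -zpoly_one.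
  apply: int_series_lin; rewrite ?ones_coef0 ?addn_gt0 ?ha //.
  exact/int_series_inv/int_series_qnum.
have hd : zpoly (de (qcf true [:: a; b])) != 0.
  rewrite zpoly_de_add zpoly_de_mon_inv zpoly_one mul1r.
  by apply: coef0_neq0; rewrite ones_coef0 ?oner_neq0.
by split => //; split => //; apply: nu_neq0_of_val => //; exact: int_series_neq0.
Qed.

Lemma qcf_step a b c r : (0 < a)%N -> (0 < b)%N ->
  lf_nonzero (qcf true (c :: r)) -> int_series (lf_val (qcf true (c :: r))) ->
  lf_val (qcf true [:: a, b, c & r]) = psi a b (lf_val (qcf true (c :: r))) /\
  lf_nonzero (qcf true [:: a, b, c & r]).
Proof.
move=> ha hb [hnT _] hI.
set T := qcf true (c :: r); set W := lf_val T.
set Y := lf_add (qint_inv b) (lf_mul (lf_mon (- Z.of_nat b)) (lf_inv T)).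
have eqcf : qcf true [:: a, b, c & r] =
  lf_add (qint a) (lf_mul (lf_mon (Z.of_nat a)) (lf_inv Y)) by [].
have hdY : zpoly (de Y) != 0 by rewrite zpoly_de_add zpoly_de_mon_inv zpoly_one mul1r.
have hW := int_series_neq0 hI.
have hD := int_series_neq0 (int_series_psi_denom b hI).
have eXb : X ^+ b = X * X ^+ b.-1 by rewrite -exprS prednK.
have eY : lf_val Y = (1 + X * qnum b * W) / (X * X ^+ b.-1 * W).
  rewrite lf_val_add ?zpoly_de_mon_inv ?zpoly_one ?oner_neq0 //.
  rewrite lf_val_mul lf_val_inv lf_val_mon lf_val_qint_inv // XzN Xz_nat eXb.
  exact: (field_cf_tail (qnum b) X_neq0 (Xn_neq0 b.-1) hW).
have hY : lf_val Y != 0.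
  rewrite eY; apply: (mulf_neq0 hD); apply: invr_neq0.
  exact: mulf_neq0 (mulf_neq0 X_neq0 (Xn_neq0 _)) hW.
have hnY := nu_neq0_of_val hdY hY.
have hde : zpoly (de (qcf true [:: a, b, c & r])) != 0.
  by rewrite eqcf zpoly_de_add zpoly_de_mon_inv zpoly_one mul1r.
have eval : lf_val (qcf true [:: a, b, c & r]) = psi a b W.
  rewrite eqcf lf_val_add ?zpoly_de_mon_inv ?zpoly_one ?oner_neq0 //.
  rewrite lf_val_mul lf_val_inv lf_val_mon lf_val_qint eY invf_div Xz_nat.
  by rewrite /psi exprD eXb !mulrA.
split; [exact: eval | split; last exact: hde].
apply: (nu_neq0_of_val hde); rewrite eval.
exact/int_series_neq0/int_series_psi.
Qed.

Definition all_pos (l : list nat) : bool := all (fun d => 0 < d)%N l.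
Definition even_pos (t : list nat) : Prop := (exists m, size t = (m.+1).*2) /\ all_pos t.

Lemma even_pos_cat J pre t : size pre = J.*2 -> all_pos pre -> even_pos t ->
  even_pos (pre ++ t).
Proof.
move=> hs hp [[m hm] ht]; split; last by rewrite /all_pos all_cat; apply/andP.
by exists (J + m)%N; rewrite size_cat hs hm addnS doubleS doubleD addnS.
Qed.

Lemma qcf_even_pos t : even_pos t ->
  lf_nonzero (qcf true t) /\ int_series (lf_val (qcf true t)).
Proof.
move=> [[n]]; elim: n t => [|n IH] [|a [|b t]] //=.
  by case: t => // _; rewrite /all_pos /= andbT => /andP [ha hb]; apply: qcf_pair.
move=> /eqP; rewrite !eqSS => /eqP hs /andP [ha /andP [hb ht]].
case: t hs ht => [|c r] hs ht //.
have [hw hi] := IH (c :: r) hs ht.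
by have [-> hw'] := qcf_step ha hb hw hi; split => //; apply: int_series_psi.
Qed.

Lemma qcf_common_prefix J pre t t' : size pre = J.*2 -> all_pos pre ->
  even_pos t -> even_pos t' ->
  ord_ge (Z.of_nat J) (lf_val (qcf true (pre ++ t)) - lf_val (qcf true (pre ++ t'))).
Proof.
elim: J pre => [|J IH] [|a [|b pre]] //= hs hp ht ht'.
  by apply: ord_ge_sub; apply: int_series_ord_ge0;
    [case: (qcf_even_pos ht) | case: (qcf_even_pos ht')].
move: hs => /eqP; rewrite !eqSS => /eqP hs.
move: hp => /andP [ha /andP [hb hp]].
have hu := even_pos_cat hs hp ht; have hu' := even_pos_cat hs hp ht'.
have [hw hi] := qcf_even_pos hu; have [hw' hi'] := qcf_even_pos hu'.
have hv := IH pre hs hp ht ht'.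
case: (pre ++ t) hu hw hi hv => [[[m]] //|c r] _ hw hi hv.
case: (pre ++ t') hu' hw' hi' hv => [[[m]] //|c' r'] _ hw' hi' hv.
rewrite (qcf_step ha hb hw hi).1 (qcf_step ha hb hw' hi').1.
apply: (@ord_ge_le _ (Z.of_nat J + Z.of_nat (a + b))%zz); first lia.
exact: ord_ge_psi.
Qed.

(* The rational 0 in the form used by [ser_upto] ([%Q] denotes [rat] here). *)
Notation q0 := (Qmake Z0 xH).

Lemma Q2R_fold_plus (f : nat -> Q) (l : list nat) :
  Q2R (List.fold_right Qplus q0 (List.map f l)) = \sum_(i <- l) Q2R (f i).
Proof.
elim: l => [|a l IH] /=; first by rewrite big_nil /Q2R /= Rmult_0_l.
by rewrite Q2R_plus big_cons IH.
Qed.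

Lemma Q2R_neq0 (q : Q) : ~ Qeq q q0 -> Q2R q != 0.
Proof. by move=> h; apply/eqP => e; apply: h; apply: eqR_Qeq; rewrite e /Q2R /= Rmult_0_l. Qed.

Lemma nth_map_inject_Z l i : Q2R (List.nth i (List.map inject_Z l) q0) = (zpoly l)`_i.
Proof. by rewrite zpoly_coef -ContinuedFraction.Q2R_inject_Z -(List.map_nth inject_Z l Z0 i). Qed.

Lemma length_ser_upto P D n : length (ser_upto P D n) = n.+1.
Proof. by elim: n => [|n IH] //=; rewrite List.length_app IH /= Nat.add_1_r. Qed.

Lemma ser_upto_spec (P D : list Q) n : ~ Qeq (List.nth 0 D q0) q0 ->
  forall t, (t <= n)%N ->
  \sum_(i < t.+1) Q2R (List.nth i D q0) * Q2R (List.nth (t - i) (ser_upto P D n) q0)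
    = Q2R (List.nth t P q0).
Proof.
move=> hD0; have hd0 := Q2R_neq0 hD0.
elim: n => [|n IH] t ht.
  rewrite leqn0 in ht; move/eqP: ht => ->.
  by rewrite big_ord1 /= Q2R_div // RdivE mulrC divfK.
set cs := ser_upto P D n.
have hl : length cs = n.+1 by exact: length_ser_upto.
have nth_cs y j : (j < length cs)%N -> List.nth j (cs ++ y) q0 = List.nth j cs q0.
  by move=> hj; rewrite List.app_nth1 //; apply/ssrnat.ltP.
pose c := Qdiv (Qminus (List.nth n.+1 P q0) (List.fold_right Qplus q0
  (List.map (fun i => Qmult (List.nth i D q0) (List.nth (n.+1 - i) cs q0)) (List.seq 1 n.+1))))
  (List.nth 0 D q0).
change (ser_upto P D n.+1) with (cs ++ cons c nil).
case: (leqP t n) => htn.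
  rewrite -(IH t htn); apply: eq_bigr => i _; rewrite nth_cs // hl ltnS.
  exact: leq_trans (leq_subr _ _) htn.
have -> : t = n.+1 by apply/eqP; rewrite eqn_leq ht htn.
rewrite big_ord_recl subn0 -hl List.app_nth2 // Nat.sub_diag /= hl.
rewrite /c Q2R_div // Q2R_minus Q2R_fold_plus RdivE RminusE.
set S := \sum_(i <- _) _.
have -> : S = \sum_(i < n.+1) Q2R (List.nth (bump 0 i) D q0) *
      Q2R (List.nth (n.+1 - bump 0 i) (cs ++ cons c nil) q0).
  rewrite /S -[List.seq 1 n.+1]/(iota (1 + 0) n.+1) iotaDl big_map.
  rewrite -[iota 0 n.+1]/(index_iota 0 n.+1) big_mkord.
  apply: eq_bigr => i _; rewrite Q2R_mult add1n subSS nth_cs // hl ltnS.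
  exact: leq_subr.
by rewrite mulrC divfK //; ring.
Qed.

Definition ser_poly (lp ld : list Z) (n : nat) : {poly R} :=
  \poly_(i < n.+1)
    Q2R (List.nth i (ser_upto (List.map inject_Z lp) (List.map inject_Z ld) n) q0).

Lemma ser_poly_ord_ge (lp ld : list Z) n : (zpoly ld)`_0 != 0 ->
  ord_ge (Z.of_nat n.+1) ((zpoly lp)%:F / (zpoly ld)%:F - (ser_poly lp ld n)%:F).
Proof.
move=> hd0; set C := ser_poly lp ld n.
have hQ : ~ Qeq (List.nth 0 (List.map inject_Z ld) q0) q0.
  by move=> e; move: hd0; rewrite -nth_map_inject_Z (Qeq_eqR _ _ e) /Q2R /= Rmult_0_l eqxx.
have hlow : forall i, (i < n.+1)%N -> (zpoly lp - zpoly ld * C)`_i = 0.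
  move=> i hi; apply/eqP; rewrite coefB subr_eq0 coefM -nth_map_inject_Z.
  rewrite -(@ser_upto_spec _ _ n hQ i hi); apply/eqP.
  apply: eq_bigr => j _; rewrite nth_map_inject_Z coef_poly.
  by rewrite (leq_ltn_trans (leq_subr _ _) hi).
exists (drop_poly n.+1 (zpoly lp - zpoly ld * C)), (zpoly ld); split => //.
rewrite Xz_nat field_sub_div ?tofrac_coef0_neq0 // -rmorphM -rmorphB /=.
by rewrite {1}(low_coefs_div hlow) rmorphM /= tofracXn mulrA.
Qed.

Lemma zpoly_lz l : zpoly l = 'X^(lz l) * zpoly (List.skipn (lz l) l).
Proof.
elim: l => [|z t IH] /=; first by rewrite mulr0.
case: (Z.eqb_spec z Z0) => hz /=; last by rewrite expr0 mul1r.
by rewrite hz add0r {1}IH exprS mulrA.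
Qed.

Lemma lz_coef0 l : zpoly l != 0 -> (zpoly (List.skipn (lz l) l))`_0 != 0.
Proof.
elim: l => [|z t IH]; first by rewrite /= eqxx.
rewrite [lz _]/=; case: (Z.eqb_spec z Z0) => hz.
  rewrite /= hz add0r => h; apply: IH.
  by apply: contraNneq h => ->; rewrite mulr0.
by move=> _; rewrite zpoly_coef /=; apply/eqP => /eq_IZR.
Qed.

Lemma lf_val_normal x :
  lf_val x = Xz (sh x - Z.of_nat (lz (de x))) *
    ((zpoly (nu x))%:F / (zpoly (List.skipn (lz (de x)) (de x)))%:F).
Proof.
rewrite /lf_val [zpoly (de x)]zpoly_lz rmorphM /= tofracXn invfM.
rewrite -Z.add_opp_r XzD XzN Xz_nat; ring.
Qed.

Lemma coef_shift_agree (m : Z) (C P : {poly R}) (k n : nat) :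
  Z.of_nat n = (Z.of_nat k - m)%zz ->
  ord_ge (Z.of_nat k.+1) (Xz m * C%:F - P%:F) -> C`_n = P`_k.
Proof.
move=> hnk hv; case: (Z.leb_spec 0 m) => hm.
  have em : Xz m = ('X^(Z.to_nat m))%:F by rewrite tofracXn -Xz_nat Z2Nat.id.
  have hp : ord_ge (Z.of_nat k.+1) (('X^(Z.to_nat m) * C - P)%:F).
    by rewrite rmorphB rmorphM /= -em.
  have := ord_ge_poly_coef hp (ltnSn k); rewrite coefB coefXnM.
  have -> : (k < Z.to_nat m)%N = false by apply/negbTE; rewrite -leqNgt; lia.
  have -> : (k - Z.to_nat m)%N = n by lia.
  by move/eqP; rewrite subr_eq0 => /eqP.
have em : Xz (- m) = ('X^(Z.to_nat (- m)))%:F.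
  by rewrite tofracXn -Xz_nat Z2Nat.id //; lia.
have hp : ord_ge (Z.of_nat n.+1) ((C - 'X^(Z.to_nat (- m)) * P)%:F).
  have -> : (C - 'X^(Z.to_nat (- m)) * P)%:F = Xz (- m) * (Xz m * C%:F - P%:F).
    by rewrite mulrBr mulrA -XzD Z.add_opp_diag_l Xz0 mul1r em rmorphB rmorphM.
  apply: (@ord_ge_le _ (- m + Z.of_nat k.+1)%zz); first lia.
  by apply: ord_ge_mul => //; exact: ord_ge_Xz.
have := ord_ge_poly_coef hp (ltnSn n); rewrite coefB coefXnM.
have -> : (n < Z.to_nat (- m))%N = false by apply/negbTE; rewrite -leqNgt; lia.
have -> : (n - Z.to_nat (- m))%N = k by lia.
by move/eqP; rewrite subr_eq0 => /eqP.
Qed.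

Lemma lf_coef_agree x (P : {poly R}) k : zpoly (de x) != 0 ->
  ord_ge (Z.of_nat k.+1) (lf_val x - P%:F) -> Q2R (lf_coef x k) = P`_k.
Proof.
move=> hde hv.
set j := lz (de x); set ld := List.skipn j (de x); set m := (sh x - Z.of_nat j)%zz.
have hd0 : (zpoly ld)`_0 != 0 by exact: lz_coef0.
have hval : lf_val x = Xz m * ((zpoly (nu x))%:F / (zpoly ld)%:F) by exact: lf_val_normal.
rewrite /lf_coef -/j -/ld.
case: (Z.ltb_spec (Z.of_nat k - sh x + Z.of_nat j) 0) => hidx.
  have hx : ord_ge (Z.of_nat k.+1) (lf_val x).
    apply: (@ord_ge_le _ (m + 0)%zz); first by rewrite /m; lia.
    by rewrite hval; apply: ord_ge_mul; [exact: ord_ge_Xz | exact: ord_ge_frac].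
  have hP : ord_ge (Z.of_nat k.+1) (P%:F).
    by rewrite -[P%:F](subKr (lf_val x)); apply: ord_ge_sub.
  by rewrite (ord_ge_poly_coef hP (ltnSn k)) /Q2R /= Rmult_0_l.
set n := Z.to_nat (Z.of_nat k - sh x + Z.of_nat j).
have hnk : Z.of_nat n = (Z.of_nat k - m)%zz by rewrite /n /m; lia.
set C := ser_poly (nu x) ld n.
have -> : Q2R (List.nth n (ser_upto (List.map inject_Z (nu x)) (List.map inject_Z ld) n) q0)
  = C`_n by rewrite coef_poly ltnSn.
apply: (coef_shift_agree hnk).
have -> : Xz m * C%:F - P%:F =
  (lf_val x - P%:F) - Xz m * ((zpoly (nu x))%:F / (zpoly ld)%:F - C%:F).
  by rewrite hval; ring.
apply: ord_ge_sub => //.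
apply: (@ord_ge_le _ (m + Z.of_nat n.+1)%zz); first lia.
by apply: ord_ge_mul; [exact: ord_ge_Xz | exact: ser_poly_ord_ge].
Qed.

(* It is read off a
   truncation of the integral series [pre ++ [1; 1]]_q. *)
Lemma qcf_coef_prefix (pre : list nat) (k : nat) :
  size pre = (k.+1).*2 -> all_pos pre ->
  exists z : Z, forall rest, even_pos rest ->
    Qeq (lf_coef (qcf true (pre ++ rest)) k) (inject_Z z).
Proof.
move=> hs hp.
have ht0 : even_pos [:: 1; 1]%N by split; [exists 0%N|].
have [_ hI0] := qcf_even_pos (even_pos_cat hs hp ht0).
have [l hl] := int_series_trunc k.+1 hI0.
exists (List.nth k l Z0) => rest hr.
have [[_ hde] _] := qcf_even_pos (even_pos_cat hs hp hr).
have hv := qcf_common_prefix hs hp hr ht0.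
apply: eqR_Qeq; rewrite ContinuedFraction.Q2R_inject_Z -zpoly_coef; apply: lf_coef_agree => //.
have -> : lf_val (qcf true (pre ++ rest)) - (zpoly l)%:F =
  (lf_val (qcf true (pre ++ rest)) - lf_val (qcf true (pre ++ [:: 1; 1]%N))) +
  (lf_val (qcf true (pre ++ [:: 1; 1]%N)) - (zpoly l)%:F) by ring.
exact: ord_ge_add.
Qed.

Lemma cat_app (l r : list nat) : l ++ r = List.app l r.
Proof. by elim: l => //= a l ->. Qed.

Lemma size_length (l : list nat) : size l = List.length l.
Proof. by elim: l => //= a l ->. Qed.

Lemma size_even_prefix (pre : list nat) k :
  List.length pre = Nat.mul 2 (S k) -> size pre = (k.+1).*2.
Proof. by rewrite size_length => ->; lia. Qed.

Lemma all_pos_Forall (l : list nat) : List.Forall (fun d => le 1 d) l -> all_pos l.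
Proof. by elim => //= d t /ssrnat.leP hd _ IH; rewrite /all_pos /= hd. Qed.

Lemma even_pos_of_list (t : list nat) : Nat.even (List.length t) = true -> t <> nil ->
  List.Forall (fun d => le 1 d) t -> even_pos t.
Proof.
move=> he hn hf; split; last exact: all_pos_Forall.
have [[|m] hm] : exists m, List.length t = Nat.mul 2 m by apply/Nat.even_spec.
  by case: t hn {he hf} hm.
by exists m; rewrite size_length hm; lia.
Qed.

End QSeries.

Section Stability.
Import ListNotations ContinuedFraction QSeries.
Local Open Scope R_scope.

Lemma Q2R_as_ratio (t : Q) : (1 <= t)%Q ->
  Q2R t = INR (Z.to_nat (Qnum t)) / INR (Pos.to_nat (Qden t)).
Proof.
intros h. assert (hnum : (0 < Qnum t)%Z).
{ unfold Qle in h. simpl in h. pose proof (Pos2Z.is_pos (Qden t)). lia. }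
unfold Q2R. rewrite !INR_IZR_INZ, Z2Nat.id, positive_nat_Z by lia. reflexivity.
Qed.

Lemma qdef_prefix (t : Q) pre rest :
  ~ (t == 1)%Q -> Nat.even (length pre) = true -> admissible rest ->
  euclid_cf (Z.to_nat (Qnum t)) (Pos.to_nat (Qden t)) = pre ++ rest ->
  exists rest', even_pos rest' /\ qdef t = qcf true (pre ++ rest').
Proof.
intros ht1 hev hadm hcf.
destruct (evenize_prefix pre rest hev hadm) as [rest' [he [hre [hrn hrf]]]].
exists rest'. split; [exact (even_pos_of_list hre hrn hrf)|].
unfold qdef. destruct (Qeq_bool t 1) eqn:E.
- apply Qeq_bool_eq in E. contradiction.
- unfold even_cf. change (cf_nat _ _ _) with (euclid_cf (Z.to_nat (Qnum t)) (Pos.to_nat (Qden t))).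
  rewrite hcf, he. reflexivity.
Qed.

Lemma varkappa_eventually_constant x (k : nat) : 1 < x -> irrational x ->
  exists z : Z, forall xs : nat -> Q, (forall n, (1 <= xs n)%Q) ->
    Un_cv (fun n => Q2R (xs n)) x ->
    exists N : nat, forall n : nat, (N <= n)%nat -> (varkappa (xs n) k == inject_Z z)%Q.
Proof.
intros hx hirr.
destruct (cf_prefix_stable (2 * S k) x hx hirr) as [pre [hl [hf hstable]]].
destruct (qcf_coef_prefix (size_even_prefix hl) (all_pos_Forall hf)) as [z hz].
exists z. intros xs h1 hcv.
set (a := fun n => Z.to_nat (Qnum (xs n))).
set (b := fun n => Pos.to_nat (Qden (xs n))).
destruct (hstable a b) as [N1 H1].
- exists 0%nat. intros n _. unfold b. lia.
- apply (Un_cv_eventually_ext (fun n => Q2R (xs n))); [exact hcv|].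
  exists 0%nat. intros n _. symmetry. apply Q2R_as_ratio, h1.
- destruct (Un_cv_eventually_between _ _ 1 (x + 1) hcv ltac:(lra)) as [N2 H2].
  exists (Nat.max N1 N2). intros n hn.
  destruct (H1 n ltac:(lia)) as [rest [hcf hadm]].
  assert (hne1 : ~ (xs n == 1)%Q).
  { intro E. apply Qeq_eqR in E. specialize (H2 n ltac:(lia)).
    rewrite E in H2. unfold Q2R in H2. simpl in H2. lra. }
  assert (hev : Nat.even (length pre) = true).
  { rewrite hl. apply Nat.even_spec. exists (S k). reflexivity. }
  destruct (qdef_prefix (xs n) pre rest hne1 hev hadm hcf) as [rest' [hr' hq]].
  unfold varkappa. rewrite hq, <- cat_app. apply hz, hr'.
Qed.

End Stability.

Theorem theorem1 :
  forall x : R,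
    (1 < x)%R ->
    ~ (exists r : Q, Q2R r = x) ->
    exists kappa : nat -> Z,
      forall xs : nat -> Q,
        (forall n, (1 <= xs n)%Q) ->
        Un_cv (fun n => Q2R (xs n)) x ->
        forall k : nat, exists N : nat, forall n : nat, (N <= n)%nat ->
          (varkappa (xs n) k == inject_Z (kappa k))%Q.
Proof.
intros x hx hrat.
assert (hirr : ContinuedFraction.irrational x) by (intros r e; apply hrat; exists r; exact e).
destruct (functional_choice _ (fun k => varkappa_eventually_constant x k hx hirr))
  as [kappa hkappa].
exists kappa. intros xs h1 hcv k. exact (hkappa k xs h1 hcv).
Qed.
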